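(* Let $h$ be a history. If for all $d_1,d_2\in\mathrm{dom}(h)$ we have $h|_{\{d_1,d_2\}}\sqsubseteq M(R_{EnqDeq})$, then $h\sqsubseteq M(R_{EnqDeq})$.
   Context: Data values are natural numbers. Operations (resp. method events) are pairs of a method in $\{Enq, Deq, DeqEmpty\}$ and a data value. A history $h$ is a finite set of operations with a strict partial order $<_{hb}$ (happens-before) that is an interval order (if $o_1<_{hb}o_2$ and $o_3<_{hb}o_4$ then $o_1<_{hb}o_4$ or $o_3<_{hb}o_2$). $\mathrm{dom}(h)$ is the set of data values occurring in $h$; for $D\subseteq\mathbb N$, $h|_D$ is the restriction of $h$ to operations with data value in $D$ (with the induced order). A sequential execution is a finite sequence of method events. $h\sqsubseteq u$ means there is a bijection between operations of $h$ and positions of $u$ preserving method and data value such that $o_1<_{hb}o_2$ implies the image of $o_1$ precedes that of $o_2$; $h\sqsubseteq S$ means $h\sqsubseteq u$ for some $u\in S$. $M(R_{EnqDeq})$ is the set of sequential executions of the form $Enq(x)\cdot u\cdot Deq(x)\cdot v$ for some data value $x$, where $u$ consists only of $Enq$ events and $x$ occurs neither in $u$ nor in $v$. *)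

From HB Require Import structures.
From mathcomp Require Import all_boot.
Set Implicit Arguments. Unset Strict Implicit. Unset Printing Implicit Defensive.

Inductive method := Enq | Deq | DeqEmpty.

Definition method_eqb (a b : method) : bool :=
  match a, b with
  | Enq, Enq | Deq, Deq | DeqEmpty, DeqEmpty => true
  | _, _ => false
  end.

Lemma method_eqP : Equality.axiom method_eqb.
Proof. by case; case; constructor. Qed.

HB.instance Definition _ := hasDecEq.Build method method_eqP.

Definition op := (method * nat)%type.

(* A history: a finite set of operations (duplicate-free list) with a
   happens-before relation. *)
Record history := History { ops : seq op; hb : rel op }.

(* Well-formedness: ops is a set; hb is a strict partial order on ops that is
   an interval order. *)
Definition is_history (h : history) : Prop :=
  [/\ uniq (ops h),
      {in ops h, forall o, ~~ hb h o o},
      {in ops h & &, forall o1 o2 o3, hb h o1 o2 -> hb h o2 o3 -> hb h o1 o3} &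
      {in ops h & &, forall o1 o2 o3, forall o4, o4 \in ops h ->
          hb h o1 o2 -> hb h o3 o4 -> hb h o1 o4 || hb h o3 o2}].

Definition dom (h : history) : seq nat := map snd (ops h).

Definition restrict (h : history) (D : pred nat) : history :=
  History [seq o <- ops h | D o.2] (hb h).

Definition execution := seq op.

(* h ⊑ u : a bijection between operations of h and positions of u that
   preserves method and data value and respects happens-before. *)
Definition sqle_exec (h : history) (u : execution) : Prop :=
  exists f : op -> nat,
    [/\ size u = size (ops h),
        {in ops h &, injective f},
        {in ops h, forall o, f o < size u /\ nth o u (f o) = o} &
        {in ops h &, forall o1 o2, hb h o1 o2 -> f o1 < f o2}].

Definition sqle_set (h : history) (S : execution -> Prop) : Prop :=
  exists u, S u /\ sqle_exec h u.

Definition M_EnqDeq (w : execution) : Prop :=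
  exists (x : nat) (u v : execution),
    [/\ w = (Enq, x) :: u ++ (Deq, x) :: v,
        all (fun e : op => e.1 == Enq) u,
        x \notin map snd u &
        x \notin map snd v].

From mathcomp Require Import all_boot.
Set Implicit Arguments. Unset Strict Implicit. Unset Printing Implicit Defensive.

(* The two-element restrictions show that every value d has exactly the
   operations Enq(d) and Deq(d), that Deq(d) never precedes Enq(d), and that
   no pair of values is dequeued in the reverse order of a happens-before
   ordered pair of enqueues.  Since happens-before is an interval order, the
   successor (resp. predecessor) sets of operations are totally ordered by
   inclusion.  Take Deq(y0) with the largest successor set, and among the
   values x whose Deq(x) does not follow Deq(y0) take one whose Enq(x) has the
   smallest predecessor set: then nothing precedes Enq(x) and no dequeue
   precedes Deq(x).  Enq(x), a linear extension of the predecessors of Deq(x)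
   (all enqueues), Deq(x) and a linear extension of the rest is the required
   sequential execution. *)

Section Sequences.
Variable T : eqType.

Lemma count_lt_in (P Q : pred T) (s : seq T) x :
  {in s, subpred P Q} -> x \in s -> Q x -> ~~ P x -> count P s < count Q s.
Proof.
move=> PQ xs Qx nPx.
rewrite -[count Q s]size_filter -(count_predC P (filter Q s)) count_filter.
rewrite (eq_in_count (a2 := P)); last first.
  by move=> y ys /=; apply/andP/idP => [[] | Py]; last by split; last exact: PQ.
rewrite -addn1 leq_add2l -has_count; apply/hasP; exists x => //.
by rewrite mem_filter Qx.
Qed.

Lemma total_preorder_greatest (R : T -> T -> Prop) (s : seq T) :
  {in s &, forall a b, R a b \/ R b a} ->
  {in s & &, forall a b c, R a b -> R b c -> R a c} ->
  s != [::] -> exists2 m, m \in s & {in s, forall a, R a m}.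
Proof.
elim: s => // a s IH Rtot Rtr _.
have Raa : R a a by case: (Rtot a a); rewrite ?mem_head.
have [->|s_ne] := eqVneq s [::].
  by exists a; rewrite ?mem_head // => c; rewrite inE => /eqP->.
have sub_s : {subset s <= a :: s} by move=> c cs; rewrite inE cs orbT.
have [m ms mmax] := IH (sub_in2 sub_s Rtot) (sub_in3 sub_s Rtr) s_ne.
have ms' := sub_s m ms.
case: (Rtot a m (mem_head _ _) ms') => [Ram | Rma].
  by exists m => // c; rewrite inE => /predU1P [-> | /mmax].
exists a; rewrite ?mem_head // => c; rewrite inE => /predU1P [-> // | cs].
exact: Rtr (sub_s c cs) ms' (mem_head _ _) (mmax c cs) Rma.
Qed.

Definition respects (r : rel T) (t : seq T) :=
  {in t &, forall a b, r a b -> index a t < index b t}.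

Lemma respects_cat (r : rel T) (t1 t2 : seq T) :
  respects r t1 -> respects r t2 -> {in t2 & t1, forall b a, ~~ r b a} ->
  respects r (t1 ++ t2).
Proof.
move=> r1 r2 r21 a b; rewrite !mem_cat !index_cat.
case: (boolP (a \in t1)) => a1; case: (boolP (b \in t1)) => b1 /= a12 b12 rab.
- exact: r1.
- by rewrite (@leq_trans (size t1)) ?index_mem ?leq_addr.
- by have := r21 a b a12 b1; rewrite rab.
- by rewrite ltn_add2l; apply: r2.
Qed.

Lemma respects1 (r : rel T) a : ~~ r a a -> respects r [:: a].
Proof. by move=> raa b c; rewrite !inE => /eqP-> /eqP->; rewrite (negbTE raa). Qed.

Lemma exists_linear_extension (r : rel T) (s : seq T) :
  {in s, forall a, ~~ r a a} ->
  {in s & &, forall a b c, r a b -> r b c -> r a c} ->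
  exists2 t, perm_eq t s & respects r t.
Proof.
move=> irr tr.
(* Sort by number of predecessors, which r strictly increases. *)
pose key a := count (r^~ a) s; pose t := sort (relpre key leq) s.
have st : sorted (relpre key leq) t by apply: sort_sorted => a b; apply: leq_total.
exists t; first exact/permPl/perm_sort.
move=> a b; rewrite !mem_sort => as_ bs rab.
have key_lt : key a < key b.
  by apply: (count_lt_in (x := a)) => // [c cs rca|]; [apply: tr rab | apply: irr].
rewrite ltnNge; apply: contraL key_lt => le_ba.
have key_tr : transitive (relpre key leq) by move=> c d e; apply: leq_trans.
have := sorted_leq_nth key_tr (fun c => leqnn (key c)) a st (index b t) (index a t).
rewrite !inE !index_mem !mem_sort => /(_ bs as_ le_ba).
by rewrite !nth_index ?mem_sort // -ltnNge.
Qed.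

End Sequences.

Definition interval_order (T : eqType) (r : rel T) (s : seq T) :=
  {in s & &, forall a b c, forall d, d \in s -> r a b -> r c d -> r a d || r c b}.

Section IntervalOrder.
Variables (T : eqType) (r : rel T) (s : seq T).
Hypothesis r_interval : interval_order r s.

Lemma interval_order_converse : interval_order (fun a b => r b a) s.
Proof. by move=> a b c d as_ bs cs ds rba rdc; apply: r_interval rdc rba. Qed.

Lemma interval_order_succ_nested a c : a \in s -> c \in s ->
  {in s, forall p, r a p -> r c p} \/ {in s, forall p, r c p -> r a p}.
Proof.
move=> as_ cs; case: (boolP (all (fun p => r a p ==> r c p) s)) => [/allP ac | ].
  by left=> p ps; apply/implyP/ac.
case/allPn => p ps; rewrite negb_imply => /andP [rap /negbTE nrcp].
by right=> q qs rcq; have := r_interval as_ ps cs qs rap rcq; rewrite nrcp orbF.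
Qed.

Lemma interval_order_greatest_succ (c : seq T) : {subset c <= s} -> c != [::] ->
  exists2 m, m \in c & {in c, forall a, {in s, forall p, r a p -> r m p}}.
Proof.
move=> cs.
apply: (total_preorder_greatest (R := fun a b => {in s, forall p, r a p -> r b p})).
  by move=> a b ac bc; apply: interval_order_succ_nested (cs a ac) (cs b bc).
by move=> a b m _ _ _ ab bm p ps rap; apply/bm/ab.
Qed.

Lemma interval_order_least_succ (c : seq T) : {subset c <= s} -> c != [::] ->
  exists2 m, m \in c & {in c, forall a, {in s, forall p, r m p -> r a p}}.
Proof.
move=> cs.
apply: (total_preorder_greatest (R := fun a b => {in s, forall p, r b p -> r a p})).
  by move=> a b ac bc; apply/or_comm/interval_order_succ_nested; apply: cs.
by move=> a b m _ _ _ ab bm p ps rmp; apply/ab/bm.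
Qed.

End IntervalOrder.

Lemma interval_order_least_pred (T : eqType) (r : rel T) (s c : seq T) :
  interval_order r s -> {subset c <= s} -> c != [::] ->
  exists2 m, m \in c & {in c, forall a, {in s, forall p, r p m -> r p a}}.
Proof.
move=> /interval_order_converse r_int cs c_ne.
by have [m mc mmax] := interval_order_least_succ r_int cs c_ne; exists m.
Qed.

Lemma sqle_execP (h : history) (u : execution) : uniq (ops h) ->
  sqle_exec h u <-> perm_eq u (ops h) /\ respects (hb h) u.
Proof.
move=> h_uniq; split => [[f [size_u _ f_nth f_hb]] | [u_perm u_resp]].
- have sub_u : {subset ops h <= u}.
    by move=> o oh; have [lt_fo <-] := f_nth o oh; apply: mem_nth.
  have [_ mem_u] := uniq_min_size h_uniq sub_u (eq_leq size_u).
  have u_uniq : uniq u by rewrite (uniq_size_uniq h_uniq mem_u) size_u.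
  have f_index o : o \in ops h -> f o = index o u.
    by move=> oh; have [lt_fo fo] := f_nth o oh; rewrite -{2}fo index_uniq.
  split; first by apply: uniq_perm => // o; rewrite mem_u.
  by move=> o1 o2; rewrite -!mem_u => o1h o2h hb12; rewrite -!f_index //; apply: f_hb.
- exists (index^~ u); split; first exact: perm_size.
  + by move=> o1 o2; rewrite -!(perm_mem u_perm); apply: index_inj.
  + by move=> o oh; rewrite index_mem nth_index (perm_mem u_perm).
  + by move=> o1 o2; rewrite -!(perm_mem u_perm); apply: u_resp.
Qed.

Lemma sqle_M_EnqDeq_of_first_enq (h : history) x :
  is_history h -> (Enq, x) \in ops h -> (Deq, x) \in ops h ->
  {in ops h, forall o, o.2 = x -> o = (Enq, x) \/ o = (Deq, x)} ->
  {in ops h, forall o, ~~ hb h o (Enq, x)} ->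
  {in ops h, forall o, hb h o (Deq, x) -> o.1 = Enq} ->
  sqle_set h M_EnqDeq.
Proof.
case=> h_uniq irr tr _ Eh Dh data_x E_first D_enqs.
pose p o := hb h o (Deq, x); pose s0 := rem (Enq, x) (ops h).
pose before := filter p s0; pose after := rem (Deq, x) (filter (predC p) s0).
have mem_s0 o : (o \in s0) = (o != (Enq, x)) && (o \in ops h) by apply: mem_rem_uniq.
have perm_ops : perm_eq (ops h) ([:: (Enq, x)] ++ before ++ [:: (Deq, x)] ++ after).
  rewrite (permPl (perm_to_rem Eh)) perm_cons -(perm_filterC p s0) perm_cat2l.
  by apply: perm_to_rem; rewrite mem_filter /= /p (negbTE (irr _ Dh)) mem_s0 Dh.
have s0_ops : {subset s0 <= ops h} by apply: mem_rem.
have before_ops : {subset before <= ops h}.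
  by move=> o /(mem_subseq (filter_subseq _ _)) /s0_ops.
have after_ops : {subset after <= ops h}.
  by move=> o /mem_rem /(mem_subseq (filter_subseq _ _)) /s0_ops.
have [t1 t1_perm t1_resp] :=
  exists_linear_extension (sub_in1 before_ops irr) (sub_in3 before_ops tr).
have [t2 t2_perm t2_resp] :=
  exists_linear_extension (sub_in1 after_ops irr) (sub_in3 after_ops tr).
have mem_t1 o : (o \in t1) = [&& p o, o != (Enq, x) & o \in ops h].
  by rewrite (perm_mem t1_perm) mem_filter mem_s0.
have mem_t2 o : (o \in t2) = [&& o != (Deq, x), ~~ p o, o != (Enq, x) & o \in ops h].
  by rewrite (perm_mem t2_perm) mem_rem_uniq ?filter_uniq ?rem_uniq // inE mem_filter mem_s0.
exists ([:: (Enq, x)] ++ t1 ++ [:: (Deq, x)] ++ t2); split.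
  exists x, t1, t2; split=> //.
  - by apply/allP => o; rewrite mem_t1 => /and3P [oD _ oh]; apply/eqP/D_enqs.
  - apply/mapP => -[o]; rewrite mem_t1 => /and3P [oD oE oh] /esym /(data_x o oh).
    by case=> o_eq; [rewrite o_eq eqxx in oE | rewrite o_eq /p (negbTE (irr _ Dh)) in oD].
  - apply/mapP => -[o]; rewrite mem_t2 => /and4P [oD _ oE oh] /esym /(data_x o oh).
    by case=> o_eq; [rewrite o_eq eqxx in oE | rewrite o_eq eqxx in oD].
apply/sqle_execP => //; split.
  by rewrite (permPr perm_ops) perm_cat2l; apply: perm_cat => //; rewrite perm_cat2l.
apply: respects_cat; [exact: respects1 (irr _ Eh) | apply: respects_cat => // | ].
- apply: respects_cat; [exact: respects1 (irr _ Dh) | by [] | ].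
  by move=> b a; rewrite mem_t2 inE => /and4P [_ nbD _ _] /eqP ->.
- move=> b a b_in; rewrite mem_t1 => /and3P [aD _ ah]; apply/negP => ba.
  move: b_in; rewrite mem_cat inE mem_t2 => /orP [/eqP b_eq | /and4P [_ nbD _ bh]].
    by subst b; have := irr _ Dh; rewrite (tr _ _ _ Dh ah Dh ba aD).
  by rewrite /p (tr _ _ _ bh ah Dh ba aD) in nbD.
- move=> b a b_in; rewrite inE => /eqP ->; apply: E_first.
  by move: b_in; rewrite mem_cat inE mem_t1 mem_t2 => /or3P [/and3P [] | /eqP -> | /and4P []].
Qed.

Section PairwiseLinearizable.
Variable h : history.
Hypothesis h_history : is_history h.
Hypothesis h_pairs : forall d1 d2 : nat, d1 \in dom h -> d2 \in dom h ->
  sqle_set (restrict h (fun d => (d == d1) || (d == d2))) M_EnqDeq.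

Lemma dom_enq_deq d : d \in dom h ->
  [/\ (Enq, d) \in ops h, (Deq, d) \in ops h,
      {in ops h, forall o, o.2 = d -> o = (Enq, d) \/ o = (Deq, d)} &
      ~~ hb h (Deq, d) (Enq, d)].
Proof.
move=> dh; have [w [[x [u [v [-> _ xu xv]]]]]] := h_pairs dh dh.
case: h_history => h_uniq _ _ _.
case/sqle_execP => [|w_perm w_resp]; first exact: filter_uniq.
have mem_w o : (o \in (Enq, x) :: u ++ (Deq, x) :: v) = (o \in ops h) && (o.2 == d).
  by rewrite (perm_mem w_perm) mem_filter orbb andbC.
have data_w o : o \in (Enq, x) :: u ++ (Deq, x) :: v -> o.2 = d.
  by rewrite mem_w => /andP [_ /eqP].
have xd : x = d by apply: (data_w (Enq, x)); rewrite mem_head.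
subst x.
have u0 : u = [::].
  case: u xu data_w {mem_w w_perm w_resp} => // o u xu data_w.
  by move: xu; rewrite /= inE (data_w o) ?eqxx // !inE eqxx orbT.
have v0 : v = [::].
  case: v xv data_w {mem_w w_perm w_resp} => // o v xv data_w.
  by move: xv; rewrite /= inE (data_w o) ?eqxx // !inE mem_cat !inE eqxx !orbT.
subst u v; move: mem_w w_resp => /= mem_w w_resp.
have /andP [Eh _] : ((Enq, d) \in ops h) && (d == d) by rewrite -mem_w mem_head.
have /andP [Dh _] : ((Deq, d) \in ops h) && (d == d) by rewrite -mem_w !inE eqxx orbT.
split=> // [o oh od | ].
  by move: (mem_w o); rewrite oh od eqxx !inE => /orP [] /eqP; [left | right].
apply/negP => DE; have := w_resp (Deq, d) (Enq, d).
by rewrite !inE !eqxx orbT /= => /(_ isT isT DE); rewrite !eqxx.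
Qed.

Lemma fifo_pair z y : z \in dom h -> y \in dom h ->
  hb h (Deq, y) (Deq, z) -> ~~ hb h (Enq, z) (Enq, y).
Proof.
move=> zh yh DyDz; have [w [[x [u [v [-> u_enq _ _]]]]]] := h_pairs zh yh.
have [Ez Dz _ _] := dom_enq_deq zh; have [Ey Dy _ _] := dom_enq_deq yh.
case: h_history => h_uniq _ _ _.
case/sqle_execP => [|w_perm w_resp]; first exact: filter_uniq.
have in_w o : o \in ops h -> o.2 = z \/ o.2 = y ->
    o \in (Enq, x) :: u ++ (Deq, x) :: v.
  move=> oh od; rewrite (perm_mem w_perm) mem_filter oh andbT.
  by case: od => ->; rewrite eqxx ?orbT.
have := mem_head (Enq, x) (u ++ (Deq, x) :: v).
rewrite (perm_mem w_perm) mem_filter /= => /andP [xzy _].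
case/orP: xzy => /eqP xe; subst x.
  have no_deq m : (Deq, m) \notin (Enq, z) :: u.
    by rewrite inE; apply/norP; split=> //; apply/negP => /(allP u_enq).
  have := w_resp _ _ (in_w _ Dy (or_intror erefl)) (in_w _ Dz (or_introl erefl)) DyDz.
  by rewrite -cat_cons !index_cat !(negbTE (no_deq _)) /= eqxx addn0 ltnNge leq_addr.
apply/negP => EzEy.
have := w_resp _ _ (in_w _ Ez (or_introl erefl)) (in_w _ Ey (or_intror erefl)) EzEy.
by rewrite /= eqxx.
Qed.

Lemma ops_enq_or_deq m z : (m, z) \in ops h -> z \in dom h /\ (m = Enq \/ m = Deq).
Proof.
move=> mzh; have zh : z \in dom h by apply: (map_f snd mzh).
split=> //; have [_ _ data _] := dom_enq_deq zh.
by case: (data _ mzh erefl) => -[->]; [left | right].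
Qed.

Lemma exists_first_enq : dom h != [::] ->
  exists x, [/\ x \in dom h, {in ops h, forall o, ~~ hb h o (Enq, x)} &
                {in ops h, forall o, hb h o (Deq, x) -> o.1 = Enq}].
Proof.
move=> dom_ne; case: h_history => _ irr _ interval.
have deqs_sub : {subset [seq (Deq, d) | d <- dom h] <= ops h}.
  by move=> _ /mapP [d dh ->]; case: (dom_enq_deq dh).
have deqs_ne : [seq (Deq, d) | d <- dom h] != [::] by rewrite -size_eq0 size_map size_eq0.
have [_ /mapP [y0 y0h ->] deq_y0_max] :=
  interval_order_greatest_succ interval deqs_sub deqs_ne.
have succ_y0 z p : z \in dom h -> p \in ops h -> hb h (Deq, z) p -> hb h (Deq, y0) p.
  by move=> zh; apply: deq_y0_max; apply: map_f.
pose A := [seq d <- dom h | ~~ hb h (Deq, y0) (Deq, d)].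
have [Ey0 Dy0 _ not_Dy0_Ey0] := dom_enq_deq y0h.
have y0A : y0 \in A by rewrite mem_filter y0h irr.
have enqs_sub : {subset [seq (Enq, d) | d <- A] <= ops h}.
  move=> _ /mapP [d dA ->]; move: dA; rewrite mem_filter => /andP [_ dh].
  by case: (dom_enq_deq dh).
have enqs_ne : [seq (Enq, d) | d <- A] != [::].
  by rewrite -size_eq0 size_map size_eq0; apply/eqP => A0; rewrite A0 in y0A.
have [_ /mapP [x xA ->] enq_x_min] :=
  interval_order_least_pred interval enqs_sub enqs_ne.
have pred_x y p : y \in A -> p \in ops h -> hb h p (Enq, x) -> hb h p (Enq, y).
  by move=> yA; apply: enq_x_min; apply: map_f.
move: xA; rewrite mem_filter => /andP [not_Dy0_Dx xh].
have [Ex Dx _ _] := dom_enq_deq xh.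
exists x; split=> // [[m z] mzh | [m z] mzh /= mz_Dx];
  have [zh [m_E | m_D]] := ops_enq_or_deq mzh; subst m => //.
- apply/negP => Ez_Ex; case: (boolP (z \in A)) => [zA | ].
    by have := pred_x _ _ zA mzh Ez_Ex; rewrite (negbTE (irr _ mzh)).
  rewrite mem_filter zh andbT negbK => Dy0_Dz.
  by have := fifo_pair zh y0h Dy0_Dz; rewrite (pred_x _ _ y0A mzh Ez_Ex).
- apply/negP => Dz_Ex.
  by have := pred_x _ _ y0A Dy0 (succ_y0 _ _ zh Ex Dz_Ex); rewrite (negbTE not_Dy0_Ey0).
- by have := succ_y0 _ _ zh Dx mz_Dx; rewrite (negbTE not_Dy0_Dx).
Qed.

End PairwiseLinearizable.

Unset Implicit Arguments.
Theorem mainTheorem4 (h : history) :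
  is_history h ->
  dom h != [::] ->
  (forall d1 d2 : nat, d1 \in dom h -> d2 \in dom h ->
     sqle_set (restrict h (fun d => (d == d1) || (d == d2))) M_EnqDeq) ->
  sqle_set h M_EnqDeq.
Proof.
move=> h_history dom_ne h_pairs.
have [x [xh E_first D_enqs]] := exists_first_enq h_history h_pairs dom_ne.
have [Eh Dh data_x _] := dom_enq_deq h_history h_pairs xh.
exact: sqle_M_EnqDeq_of_first_enq h_history Eh Dh data_x E_first D_enqs.
Qed.
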